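(* Let $\mathcal{B}$ be a linear-quadratic algebra over $R$ with intrinsic grading as described below, and let $\mathcal{B}^!$ be its quadratic dual with differential $\mu_1$. Define $\delta:R\to\mathcal{B}\otimes_R(\mathcal{B}^!)^{op}$ by \[ \delta(e)=\sum_{i:\ e_L(b_i)=e}b_i\otimes(b_i^* )^{op} \] for each elementary idempotent $e$. Then $\delta$ satisfies the rank-one Type DD structure relations, i.e., writing $\delta(1)=\sum_s a_s\otimes c_s^{op}$, \[ \sum_s(-1)^{\deg_h c_s}\mu_1(a_s)\otimes c_s^{op}+\sum_s a_s\otimes\mu_1(c_s)^{op}+\sum_{s,t}(-1)^{\deg_h(a_t)\deg_h(c_s)}a_sa_t\otimes c_t^{op}c_s^{op}=0 \] in $\mathcal{B}\otimes_R(\mathcal{B}^!)^{op}$ (where $c_t^{op}c_s^{op}=(c_sc_t)^{op}$ and the products are zero when idempotents do not match).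
   Context: $R=\mathbb{Z}e_1\times\cdots\times\mathbb{Z}e_k$. $\mathcal{B}$ is a unital associative $R$-algebra with a finite set of multiplicative generators $b_1<\dots<b_m$, each with a unique left idempotent $e_L(b_i)$ and right idempotent $e_R(b_i)$ among the $e_j$. Let $V$ be the free abelian group on the $b_i$ (an $R$-bimodule), $T(V)=\bigoplus_{k\ge0}V^{\otimes_Rk}$, $\mathcal{B}=T(V)/J$. $\mathcal{B}$ is linear-quadratic: $J\cap V=0$ and $J=T(V)J_2T(V)$ with $J_2=J\cap(V\oplus V\otimes_RV)$. Let $I\subset V\otimes_RV$ be the projection of $J_2$, and $\varphi:I\to V$ the map with $\varphi(r)\oplus r\in J_2$ (well defined since $J\cap V=0$). $\mathcal{B}$ has an intrinsic grading with generators homogeneous, $I$ generated by homogeneous elements, $\varphi$ degree-preserving; $\mathcal{B}$ sits in homological degree $0$ with zero differential. Quadratic dual: $V^*=\mathrm{Hom}_{\mathbb{Z}}(V,\mathbb{Z})$ with dual basis $b_i^*$ (same idempotents as $b_i$), $I^\perp\subset V^*\otimes_RV^*$ the annihilator of $I$, $\mathcal{B}^!=T(V^* )/(T(V^* )I^\perp T(V^* ))$, with $b_i^*$ in bidegree $(-\deg b_i,1)$. As in the paper, restriction gives an isomorphism of the degree-$2$ part $(V^*\otimes_RV^* )/I^\perp$ with $I^*=\mathrm{Hom}_{\mathbb{Z}}(I,\mathbb{Z})$ (a $\mathbb{Z}$-basis of $I$ extends to one of $V\otimes_RV$); the differential $\mu_1$ on $\mathcal{B}^!$ is $\mu_1(v^*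 )=\varphi^*(v^* )\in I^*$ on generators, extended by $\mu_1(xy)=(-1)^{\deg_h x}\mu_1(x)y+x\mu_1(y)$. The differential on $\mathcal{B}$ is zero; homological degrees: $\deg_h b_i=0$, $\deg_h b_i^*=1$. *)

(* Concrete combinatorial model of
   B = T(V)/J,  B^! = T(V^* )/(I^perp),  and  B (x)_R (B^!)^op. *)
From mathcomp Require Import all_boot all_order all_algebra.
Set Implicit Arguments. Unset Strict Implicit. Unset Printing Implicit Defensive.
Import Order.TTheory GRing.Theory Num.Theory.
Local Open Scope ring_scope.

Inductive span (T : Type) (G : (T -> int) -> Prop) : (T -> int) -> Prop :=
| span_gen f : G f -> span G f
| span0 : span G (fun _ => 0)
| spanD f g : span G f -> span G g -> span G (fun x => f x + g x)
| spanN f : span G f -> span G (fun x => - f x)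
| span_ext f g : span G f -> (forall x, f x = g x) -> span G g.

Section Model.
Variables (k m : nat) (eL eR : 'I_m -> 'I_k).

(* b_a (x)_R b_b is nonzero iff e_R(b_a) = e_L(b_b) *)
Definition comp (a b : 'I_m) : bool := eR a == eL b.

(* Z-basis of T(V): paths (s, w, t): either w = [::] and s = t (the
   idempotent e_s), or a composable word w = b_{w_1}...b_{w_n} with
   e_L(b_{w_1}) = e_s and e_R(b_{w_n}) = e_t.  The same paths, with b_i
   replaced by b_i^*, form a Z-basis of T(V^* ). *)
Definition pth := ('I_k * seq 'I_m * 'I_k)%type.

Definition valid_pth (p : pth) : bool :=
  let '(s, w, t) := p in
  match w with
  | [::] => s == t
  | i :: w' => [&& s == eL i, path comp i w' & eR (last i w') == t]
  end.

Definition pend (p : pth) : 'I_k := p.2.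

(* elements of T(V) (resp. T(V^* )) are Z-valued coefficient functions on pth *)
Definition bas (p : pth) : pth -> int := fun x => (x == p)%:Z.

Definition pmul (p q : pth) : pth -> int :=
  let '(s, w, t) := p in let '(s', w', t') := q in
  fun x => if t == s' then (x == (s, w ++ w', t'))%:Z else 0.

Definition lmul (p : pth) (f : pth -> int) : pth -> int :=
  let '(sp, wp, tp) := p in
  fun x => let '(s, w, t) := x in
    if (s == sp) && (take (size wp) w == wp)
    then f (tp, drop (size wp) w, t) else 0.

Definition rmul (f : pth -> int) (q : pth) : pth -> int :=
  let '(sq, wq, tq) := q in
  fun x => let '(s, w, t) := x in
    let n := (size w - size wq)%N in
    if (t == tq) && (drop n w == wq) then f (s, take n w, sq) else 0.

(* V = free abelian group on the b_i : functions 'I_m -> int.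
   V (x)_R V : functions on pairs, only composable pairs matter. *)
Definition V2 := ('I_m * 'I_m -> int)%type.

Definition comp_supp (r : V2) : Prop :=
  forall ij : 'I_m * 'I_m, ~~ comp ij.1 ij.2 -> r ij = 0.

Definition emb (v : 'I_m -> int) (r : V2) : pth -> int :=
  fun x => let '(s, w, t) := x in
  match w with
  | [:: i] => if (s == eL i) && (t == eR i) then v i else 0
  | [:: i; j] => if [&& s == eL i, comp i j & t == eR j] then r (i, j) else 0
  | _ => 0
  end.

Definition ideal_gen (S : ('I_m -> int) -> V2 -> Prop) : (pth -> int) -> Prop :=
  span (fun f => exists p q v r, [/\ valid_pth p, valid_pth q, S v r &
          forall x, f x = lmul p (rmul (emb v r) q) x]).

Definition pairV2 (l r : V2) : int :=
  \sum_(ij : 'I_m * 'I_m | comp ij.1 ij.2) l ij * r ij.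

Definition addV2 (r s : V2) : V2 := fun ij => r ij + s ij.

Variable S : ('I_m -> int) -> V2 -> Prop.

(* J := T(V) J_2 T(V), J_2 = J cap (V (+) V(x)V) *)
Definition Jideal := ideal_gen S.

Definition Iset (r : V2) : Prop := comp_supp r /\ exists v, Jideal (emb v r).

Definition Iperp (l : V2) : Prop := forall r, Iset r -> pairV2 l r = 0.

Definition Kideal := ideal_gen (fun v l => (forall i, v i = 0) /\ Iperp l).

(* T(V) (x)_R T(V^* )^op: coefficient functions on pairs (p, q) of paths
   with pend p = pend q  (b e (x) c^op = b (x) (c e)^op). *)
Definition tens (f g : pth -> int) : pth * pth -> int :=
  fun x => if pend x.1 == pend x.2 then f x.1 * g x.2 else 0.

(* B (x)_R (B^!)^op = T(V)(x)_R T(V^* )^op / (J (x) T + T (x) K);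
   Nsub is this subgroup. *)
Definition Nsub : (pth * pth -> int) -> Prop :=
  span (fun h =>
    (exists f q, [/\ Jideal f, valid_pth q & forall x, h x = tens f (bas q) x]) \/
    (exists p g, [/\ valid_pth p, Kideal g & forall x, h x = tens (bas p) g x])).

Definition zero_in_tensor (h : pth * pth -> int) : Prop := Nsub h.

Definition gen (i : 'I_m) : pth := (eL i, [:: i], eR i).

Definition J_cap_V_zero : Prop :=
  forall x : pth -> int, Jideal x ->
    (forall p : pth, x p != 0 -> size p.1.2 = 1%N) -> forall p, x p = 0.

(* restriction (V^* (x)_R V^* )/I^perp -> I^* is an isomorphism, i.e. every
   Z-linear functional on I extends to V^* (x)_R V^* (equivalently a Z-basis
   of I extends to a Z-basis of V (x)_R V). *)
Definition restriction_surjective : Prop :=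
  forall f : V2 -> int,
    (forall r s, Iset r -> Iset s -> f (addV2 r s) = f r + f s) ->
    exists l : V2, forall r, Iset r -> pairV2 l r = f r.

(* L i in V^* (x)_R V^* represents mu_1(b_i^* ) = phi^*(b_i^* ) in I^*
   ~ (V^* (x)_R V^* )/I^perp = degree-2 part of B^!:  for (v, r) in J_2
   (so phi(r) = v), <L i, r> = b_i^*(phi r) = v i. *)
Definition mu1_lift (L : 'I_m -> V2) : Prop :=
  forall (i : 'I_m) (v : 'I_m -> int) (r : V2),
    comp_supp r -> Jideal (emb v r) -> pairV2 (L i) r = v i.

Definition homog_of {G : Type} (gmul : G -> G -> G) (deg : 'I_m -> G)
   (r : V2) (g : G) : Prop :=
  forall ij : 'I_m * 'I_m, r ij != 0 -> gmul (deg ij.1) (deg ij.2) = g.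

Definition graded_hyp {G : Type} (gmul : G -> G -> G) (deg : 'I_m -> G) : Prop :=
  (forall r, Iset r -> span (fun h => Iset h /\ exists g, homog_of gmul deg h g) r) /\
  (* phi is degree preserving *)
  (forall (v : 'I_m -> int) (r : V2) (g : G), comp_supp r -> Jideal (emb v r) ->
     homog_of gmul deg r g -> forall i, v i != 0 -> deg i = g).

(* mu_1 on B is zero (B has zero differential) *)
Definition muB (f : pth -> int) : pth -> int := fun _ => 0.

(* the left-hand side of the rank-one type DD relation for
   delta(1) = sum_i b_i (x) (b_i^* )^op, i.e. a_s = b_i, c_s = b_i^*,
   deg_h a_s = 0, deg_h c_s = 1, mu_1(c_s) represented by L s:
     sum_s (-1)^1 mu_1(a_s) (x) c_s^op + sum_s a_s (x) mu_1(c_s)^op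
     + sum_{s,t} (-1)^(0*1) a_s a_t (x) (c_s c_t)^op                 *)
Definition DD_lhs (L : 'I_m -> V2) : pth * pth -> int :=
  fun x =>
    \sum_(s < m) (-1) ^+ 1 * tens (muB (bas (gen s))) (bas (gen s)) x
  + \sum_(s < m) tens (bas (gen s)) (emb (fun _ => 0) (L s)) x
  + \sum_(s < m) \sum_(t < m)
       (-1) ^+ (0 * 1) * tens (pmul (gen s) (gen t)) (pmul (gen s) (gen t)) x.

End Model.

(* The left-hand side is sum_q (phi(d_q) + d_q) (x) d_q^*, with d_q running over the
   basis of V (x)_R V.  Since every Z-linear functional on I is the restriction of an
   element of V^* (x)_R V^*, the subgroup I has a Z-basis (g_a) with dual functionals
   (l_a) defined on all of V (x)_R V; then d_q^* = sum_a g_a(q) l_a + mu_q with mu_q in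
   I^perp, and the left-hand side becomes
     sum_a (phi(g_a) + g_a) (x) l_a  +  sum_q (phi(d_q) + d_q) (x) mu_q,
   whose first part lies in J (x) T(V^* ) and second part in T(V) (x) K. *)

From Pilot Require Import Defs.
From mathcomp Require Import all_boot all_order all_algebra.
From Stdlib Require Import FunctionalExtensionality Classical.
From mathcomp Require Import ring.
Set Implicit Arguments. Unset Strict Implicit. Unset Printing Implicit Defensive.
Import Order.TTheory GRing.Theory Num.Theory.
Local Open Scope ring_scope.

Section Span.
Variables (T : Type) (G : (T -> int) -> Prop).

Lemma span_scale (a : int) f : Defs.span G f -> Defs.span G (fun x => a * f x).
Proof.
move=> Gf.
have span_natmul (n : nat) : Defs.span G (fun x => n%:Z * f x).
  elim: n => [|n IHn]; first by apply: span_ext (span0 G) _ => x; rewrite mul0r.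
  by apply: span_ext (spanD IHn Gf) _ => x; rewrite intS mulrDl mul1r addrC.
case: a => n; first exact: span_natmul.
by apply: span_ext (spanN (span_natmul n.+1)) _ => x; rewrite NegzE mulNr.
Qed.

Lemma span_sum (I : Type) (r : seq I) (F : I -> T -> int) :
  (forall i, List.In i r -> Defs.span G (F i)) -> Defs.span G (fun x => \sum_(i <- r) F i x).
Proof.
elim: r => [|i r IHr] GF; first by apply: span_ext (span0 G) _ => x; rewrite big_nil.
apply: span_ext (spanD (GF i (or_introl erefl)) (IHr (fun j rj => GF j (or_intror rj)))) _.
by move=> x; rewrite big_cons.
Qed.

End Span.

Section DualBasis.
Variable T : finType.
Implicit Types (I J : (T -> int) -> Prop) (f g l w : T -> int).

Definition pairing l w : int := \sum_x l x * w x.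

Definition subgroup I : Prop :=
  [/\ I (fun _ => 0), forall f g, I f -> I g -> I (fun x => f x + g x)
    & forall f, I f -> I (fun x => - f x)].

Definition extendable I : Prop :=
  forall phi : (T -> int) -> int,
    (forall f g, I f -> I g -> phi (fun x => f x + g x) = phi f + phi g) ->
  exists l, forall w, I w -> pairing l w = phi w.

Lemma subgroup_span I f : subgroup I -> Defs.span I f -> I f.
Proof.
case=> I0 ID IN; elim=> // [{}f g _ If _ Ig|{}f _ If|{}f g _ If eq_fg].
- exact: ID.
- exact: IN.
- by have -> : g = f by apply: functional_extensionality => x; rewrite eq_fg.
Qed.

Lemma subgroup_lincomb I a f g : subgroup I -> I f -> I g -> I (fun x => f x - a * g x).
Proof.
move=> subI If Ig; apply: subgroup_span => //.
exact: spanD (span_gen If) (spanN (span_scale a (span_gen Ig))).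
Qed.

Lemma pairingDr l f g : pairing l (fun x => f x + g x) = pairing l f + pairing l g.
Proof. by rewrite /pairing -big_split; apply: eq_bigr => x _; rewrite mulrDr. Qed.

Lemma pairingBl l l' a w : pairing (fun x => l x - a * l' x) w = pairing l w - a * pairing l' w.
Proof. by rewrite /pairing mulr_sumr -sumrB; apply: eq_bigr => x _; ring. Qed.

Lemma pairingBr l f g a : pairing l (fun x => f x - a * g x) = pairing l f - a * pairing l g.
Proof. by rewrite /pairing mulr_sumr -sumrB; apply: eq_bigr => x _; ring. Qed.

(* Euclid inside I: if h c does not divide w c, then w - (w c %/ h c) h has a smaller
   positive value at c. *)
Lemma subgroup_coord_generator I c g : subgroup I -> I g -> g c != 0 ->
  exists2 h, I h & 0 < h c /\ forall w, I w -> (h c %| w c)%Z.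
Proof.
move=> subI Ig gc0.
have [n [h [Ih hc]]] : exists n : nat, exists h, I h /\ h c = n.+1%:Z.
  have [I0 _ IN] := subI.
  move: gc0; case Eg: (g c) => [[|n]|n] // _.
  - by exists n, g.
  - by exists n, (fun x => - g x); split; [exact: IN | rewrite Eg NegzE opprK].
elim/ltn_ind: n h Ih hc => n IHn h Ih hc.
have [hdiv|] := classic (forall w, I w -> (h c %| w c)%Z).
  by exists h => //; split; rewrite // hc.
move=> /not_all_ex_not [w /(@imply_to_and (I w)) [Iw w_ndiv]].
pose r := (w c %% h c)%Z.
have Ir : I (fun x => w x - (w c %/ h c)%Z * h x) by exact: subgroup_lincomb.
have rc : w c - (w c %/ h c)%Z * h c = r by rewrite {1}(divz_eq (w c) (h c)); ring.
have r_ge0 : 0 <= r by rewrite modz_ge0 // hc.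
have r_lt : r < n.+1%:Z by rewrite -hc ltz_pmod // hc.
have r_neq0 : r != 0 by apply/eqP => r0; apply: w_ndiv; apply/dvdz_mod0P.
move: r_ge0 r_lt r_neq0 rc; case: r => [[|r']|] // _; rewrite ltz_nat ltnS => lt_r' _ rc.
exact: IHn lt_r' _ Ir rc.
Qed.

Lemma extendable_coord_quotient I c g : extendable I -> 0 < g c ->
    (forall w, I w -> (g c %| w c)%Z) ->
  exists l, forall w, I w -> w c = pairing l w * g c.
Proof.
move=> extI gc_gt0 gc_dvd.
have [l Hl] := extI (fun w => (w c %/ g c)%Z) (fun f f' If _ => divzDl _ (gc_dvd f If)).
by exists l => w Iw; rewrite Hl // divzK // gc_dvd.
Qed.

Lemma extendable_retract I J (p : (T -> int) -> T -> int) :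
    (forall w, J w -> I w) -> (forall w, I w -> J (p w)) -> (forall w, J w -> p w = w) ->
    (forall f g, I f -> I g -> p (fun x => f x + g x) = (fun x => p f x + p g x)) ->
  extendable I -> extendable J.
Proof.
move=> JI pJ pK pD extI phi phiD.
have [l Hl] : exists l, forall w, I w -> pairing l w = phi (p w).
  by apply: extI => f g If Ig; rewrite pD // phiD //; apply: pJ.
by exists l => w Jw; rewrite Hl ?pK //; apply: JI.
Qed.

Lemma subgroup_coord_kernel I c : subgroup I -> subgroup (fun w => I w /\ w c = 0).
Proof.
case=> I0 ID IN; split=> [|f g [If fc] [Ig gc]|f [If fc]]; split=> //.
- exact: ID.
- by rewrite fc gc addr0.
- exact: IN.
- by rewrite fc oppr0.
Qed.

(* If the values of I at c are the multiples of h c, then I = Z h (+) {w in I | w c = 0}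
   through w |-> w - <l, w> h; induction on the support handles the second summand. *)
Lemma dual_basis_supp (cs : seq T) I : subgroup I -> extendable I ->
    (forall w, I w -> forall x, x \notin cs -> w x = 0) ->
  exists s : seq ((T -> int) * (T -> int)), (forall a, List.In a s -> I a.1) /\
    forall w, I w -> forall x, w x = \sum_(a <- s) pairing a.2 w * a.1 x.
Proof.
elim: cs I => [|c cs IHcs] I subI extI suppI.
  by exists [::]; split=> // w Iw x; rewrite big_nil suppI.
have suppI' (J : (T -> int) -> Prop) : (forall w, J w -> I w /\ w c = 0) ->
    forall w, J w -> forall x, x \notin cs -> w x = 0.
  move=> JI w /JI [Iw wc] x xcs; have [-> //|neq_xc] := eqVneq x c.
  by rewrite suppI // in_cons negb_or neq_xc.
have [Ic0|] := classic (forall w, I w -> w c = 0).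
  by apply: IHcs => //; apply: suppI' => w Iw; split; last exact: Ic0.
move=> /not_all_ex_not [w0 /(@imply_to_and (I w0)) [Iw0 /eqP w0c]].
have [h Ih [hc_gt0 hc_dvd]] := subgroup_coord_generator subI Iw0 w0c.
have [l Hl] := extendable_coord_quotient extI hc_gt0 hc_dvd.
pose J w := I w /\ w c = 0.
pose p w x := w x - pairing l w * h x.
have subJ : subgroup J := subgroup_coord_kernel c subI.
have pJ w : I w -> J (p w).
  by move=> Iw; split; [exact: subgroup_lincomb | rewrite /p -Hl // subrr].
have pK w : J w -> p w = w.
  move=> [Iw wc]; have /eqP : pairing l w * h c = 0 by rewrite -Hl.
  rewrite mulf_eq0 (gt_eqF hc_gt0) orbF => /eqP lw0.
  by apply: functional_extensionality => x; rewrite /p lw0 mul0r subr0.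
have pD f g : I f -> I g -> p (fun x => f x + g x) = (fun x => p f x + p g x).
  by move=> _ _; apply: functional_extensionality => x; rewrite /p pairingDr; ring.
have extJ : extendable J by apply: extendable_retract pJ pK pD extI => w [].
have [s [sJ s_rep]] := IHcs J subJ extJ (suppI' J (fun w Jw => Jw)).
exists ((h, l) :: [seq (a.1, fun x => a.2 x - pairing a.2 h * l x) | a <- s]); split.
  by move=> a /= [<- //|/List.in_map_iff [b [<- /sJ []]]].
move=> w Iw x; rewrite big_cons big_map /=.
under eq_bigr do rewrite pairingBl [pairing _ h * _]mulrC -pairingBr.
by rewrite -(s_rep (p w) (pJ w Iw)) /p; ring.
Qed.

Lemma dual_basis I : subgroup I -> extendable I ->
  exists s : seq ((T -> int) * (T -> int)), (forall a, List.In a s -> I a.1) /\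
    forall w, I w -> forall x, w x = \sum_(a <- s) pairing a.2 w * a.1 x.
Proof.
by move=> subI extI; apply: (dual_basis_supp (cs := enum T)) => // w _ x; rewrite mem_enum.
Qed.

Definition dual_residue (s : seq ((T -> int) * (T -> int))) (y : T) : T -> int :=
  fun x => (x == y)%:Z - \sum_(a <- s) a.1 y * a.2 x.

Lemma pairing_dual_residueE s y w :
  pairing (dual_residue s y) w = w y - \sum_(a <- s) a.1 y * pairing a.2 w.
Proof.
rewrite /pairing; under eq_bigr do rewrite mulrBl; rewrite sumrB; congr (_ - _).
  by rewrite (bigD1 y) //= eqxx mul1r big1 ?addr0 // => x /negbTE ->; rewrite mul0r.
under eq_bigr do rewrite mulr_suml; rewrite exchange_big; apply: eq_bigr => a _.
by rewrite mulr_sumr; apply: eq_bigr => x _; ring.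
Qed.

Lemma pairing_dual_residue s I y w :
    (forall w, I w -> forall x, w x = \sum_(a <- s) pairing a.2 w * a.1 x) ->
  I w -> pairing (dual_residue s y) w = 0.
Proof.
move=> s_rep Iw; rewrite pairing_dual_residueE {1}(s_rep w Iw y); apply/eqP.
by rewrite subr_eq0; apply/eqP/eq_bigr => a _; rewrite mulrC.
Qed.

Lemma pairing_split_residue s f g : pairing f g =
  \sum_(a <- s) pairing a.1 f * pairing a.2 g + \sum_y f y * pairing (dual_residue s y) g.
Proof.
under [X in _ = _ + X]eq_bigr do rewrite pairing_dual_residueE mulrBr.
rewrite sumrB.
have -> : \sum_y f y * \sum_(a <- s) a.1 y * pairing a.2 g
        = \sum_(a <- s) pairing a.1 f * pairing a.2 g.
  under eq_bigr do rewrite mulr_sumr; rewrite exchange_big; apply: eq_bigr => a _.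
  by rewrite /pairing mulr_suml; apply: eq_bigr => y _; ring.
by rewrite [RHS]addrC subrK.
Qed.

End DualBasis.

Lemma sum_if_eq (I : finType) (j : I) (F : I -> int) :
  \sum_i (if i == j then F i else 0) = F j.
Proof. by rewrite -big_mkcond big_pred1_eq. Qed.

Section Model.
Variables (k m : nat) (eL eR : 'I_m -> 'I_k).
Local Notation pth := (pth k m).
Local Notation comp := (Defs.comp eL eR).
Local Notation emb := (emb eL eR).
Implicit Types (y : pth) (v : 'I_m -> int) (r l : V2 m) (q : 'I_m * 'I_m).

Definition bas1 (i : 'I_m) : pth -> int := bas (gen eL eR i).

Definition bas2 q : pth -> int := fun y =>
  if comp q.1 q.2 then bas ((eL q.1, [:: q.1; q.2], eR q.2) : pth) y else 0.

Lemma pth_eqE (a a' : 'I_k) (w w' : seq 'I_m) (b b' : 'I_k) :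
  (((a, w, b) : pth) == (a', w', b')) = [&& a == a', w == w' & b == b'].
Proof. by rewrite !xpair_eqE andbA. Qed.

Lemma bas1E i a w b : bas1 i (a, w, b) = [&& a == eL i, w == [:: i] & b == eR i]%:Z.
Proof. by rewrite /bas1 /bas /gen pth_eqE. Qed.

Lemma bas2E q a w b : bas2 q (a, w, b) =
  (comp q.1 q.2 && [&& a == eL q.1, w == [:: q.1; q.2] & b == eR q.2])%:Z.
Proof. by rewrite /bas2 /bas pth_eqE; case: ifP. Qed.

Lemma embE v r y : emb v r y = \sum_i v i * bas1 i y + \sum_q r q * bas2 q y.
Proof.
case: y => [[a w] b]; case: w => [|i [|j [|z w]]].
- by rewrite /= !big1 ?addr0 // => q _; rewrite ?bas1E ?bas2E /= ?andbF mulr0.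
- rewrite [X in _ = _ + X]big1 ?addr0; last first.
    by move=> q _; rewrite bas2E eqseq_cons /= !andbF mulr0.
  rewrite (bigD1 i) //= big1 ?addr0; last first.
    by move=> i' ne; rewrite bas1E eqseq_cons (eq_sym i) (negbTE ne) /= !andbF mulr0.
  by rewrite bas1E eqxx /=; case: (a == eL i); case: (b == eR i); rewrite /= ?mulr1 ?mulr0.
- rewrite [X in _ = X + _]big1 ?add0r; last first.
    by move=> i' _; rewrite bas1E eqseq_cons /= !andbF mulr0.
  rewrite (bigD1 (i, j)) //= big1 ?addr0; last first.
    move=> [i' j'] /= ne; rewrite bas2E /= !eqseq_cons /= andbT.
    suff -> : (i == i') && (j == j') = false by rewrite !andbF mulr0.
    by apply/negP => /andP [/eqP e1 /eqP e2]; move: ne; rewrite e1 e2 eqxx.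
  rewrite bas2E /= !eqxx /=.
  by case: (a == eL i); case: (comp i j); case: (b == eR j); rewrite /= ?mulr1 ?mulr0.
- by rewrite /= !big1 ?addr0 // => q _; rewrite ?bas1E ?bas2E !eqseq_cons /= ?andbF mulr0.
Qed.

Lemma embD v v' r r' y :
  emb (fun i => v i + v' i) (fun q => r q + r' q) y = emb v r y + emb v' r' y.
Proof.
rewrite !embE addrACA; congr (_ + _);
  by rewrite -big_split; apply: eq_bigr => ? _; rewrite mulrDl.
Qed.

Lemma embN v r y : emb (fun i => - v i) (fun q => - r q) y = - emb v r y.
Proof. by rewrite !embE opprD -!sumrN; congr (_ + _); apply: eq_bigr => ? _; rewrite mulNr. Qed.

Lemma emb0 y : emb (fun _ => 0) (fun _ => 0) y = 0.
Proof. by rewrite embE !big1 ?addr0 // => ? _; rewrite mul0r. Qed.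

Lemma tens_embr f v r x : tens f (emb v r) x =
  \sum_i v i * tens f (bas1 i) x + \sum_q r q * tens f (bas2 q) x.
Proof.
rewrite /tens embE; case: ifP => _; last by rewrite !big1 ?addr0 // => ? _; rewrite mulr0.
by rewrite mulrDr !mulr_sumr; congr (_ + _); apply: eq_bigr => ? _; ring.
Qed.

Lemma tens_embl g v r x : tens (emb v r) g x =
  \sum_i v i * tens (bas1 i) g x + \sum_q r q * tens (bas2 q) g x.
Proof.
rewrite /tens embE; case: ifP => _; last by rewrite !big1 ?addr0 // => ? _; rewrite mulr0.
by rewrite mulrDl !mulr_suml; congr (_ + _); apply: eq_bigr => ? _; ring.
Qed.

Lemma valid_gen i : valid_pth eL eR (gen eL eR i).
Proof. by rewrite /= !eqxx. Qed.

Lemma valid_bas2 i j : comp i j -> valid_pth eL eR ((eL i, [:: i; j], eR j) : pth).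
Proof. by move=> cij; rewrite /= cij !eqxx. Qed.

Variable S : ('I_m -> int) -> V2 m -> Prop.

Lemma Nsub_tens_Jideal f v r : Jideal eL eR S f -> Nsub eL eR S (tens f (emb v r)).
Proof.
move=> Jf.
have N1 i : Nsub eL eR S (tens f (bas1 i)).
  by apply: span_gen; left; exists f, (gen eL eR i); split => //; exact: valid_gen.
have N2 q : Nsub eL eR S (tens f (bas2 q)).
  case cq: (comp q.1 q.2).
    apply: span_gen; left; exists f, (eL q.1, [:: q.1; q.2], eR q.2).
    by split=> // [|x]; [exact: valid_bas2 | rewrite /tens /bas2 cq].
  by apply: span_ext (span0 _) _ => x; rewrite /tens /bas2 cq mulr0 if_same.
apply: span_ext (spanD (span_sum (r := index_enum _) (fun i _ => span_scale (v i) (N1 i)))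
                       (span_sum (r := index_enum _) (fun q _ => span_scale (r q) (N2 q)))) _.
by move=> x; rewrite tens_embr.
Qed.

Lemma Nsub_tens_Kideal g v r : Kideal eL eR S g -> Nsub eL eR S (tens (emb v r) g).
Proof.
move=> Kg.
have N1 i : Nsub eL eR S (tens (bas1 i) g).
  by apply: span_gen; right; exists (gen eL eR i), g; split => //; exact: valid_gen.
have N2 q : Nsub eL eR S (tens (bas2 q) g).
  case cq: (comp q.1 q.2).
    apply: span_gen; right; exists (eL q.1, [:: q.1; q.2], eR q.2), g.
    by split=> // [|x]; [exact: valid_bas2 | rewrite /tens /bas2 cq].
  by apply: span_ext (span0 _) _ => x; rewrite /tens /bas2 cq mul0r if_same.
apply: span_ext (spanD (span_sum (r := index_enum _) (fun i _ => span_scale (v i) (N1 i)))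
                       (span_sum (r := index_enum _) (fun q _ => span_scale (r q) (N2 q)))) _.
by move=> x; rewrite tens_embl.
Qed.

Lemma lmul_idem (s : 'I_k) f a w b :
  lmul ((s, [::], s) : pth) f (a, w, b) = if s == a then f (a, w, b) else 0.
Proof. by rewrite /lmul /= take0 drop0 andbT eq_sym; case: eqP => [->|]. Qed.

Lemma rmul_idem (t : 'I_k) f a w b :
  rmul f ((t, [::], t) : pth) (a, w, b) = if t == b then f (a, w, b) else 0.
Proof. by rewrite /rmul /= subn0 drop_size take_size andbT eq_sym; case: eqP => [->|]. Qed.

(* emb 0 l is the sum of its idempotent components e_s (emb 0 l) e_t, each a generator. *)
Lemma Kideal_emb l : Iperp eL eR S l -> Kideal eL eR S (emb (fun _ => 0) l).
Proof.
move=> l_perp.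
have K_st (s t : 'I_k) : Kideal eL eR S
    (lmul ((s, [::], s) : pth) (rmul (emb (fun _ => 0) l) ((t, [::], t) : pth))).
  by apply: span_gen; exists (s, [::], s), (t, [::], t), (fun _ => 0), l; split=> /=.
apply: span_ext (span_sum (r := index_enum _)
  (fun s _ => span_sum (r := index_enum _) (fun t _ => K_st s t))) _.
move=> [[a w] b]; under eq_bigr do under eq_bigr do rewrite lmul_idem rmul_idem.
rewrite (eq_bigr (fun s => if s == a then emb (fun _ => 0) l (a, w, b) else 0)).
  by rewrite sum_if_eq.
by move=> s _; case: (s == a); [rewrite sum_if_eq | rewrite big1].
Qed.

Lemma pairing_pairV2 l r : comp_supp eL eR r -> pairing l r = pairV2 eL eR l r.
Proof.
move=> supp_r; rewrite /pairing /pairV2 [RHS]big_mkcond; apply: eq_bigr => q _.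
by case: ifP => // /negbT /supp_r ->; rewrite mulr0.
Qed.

Lemma Iset_subgroup : subgroup (Iset eL eR S).
Proof.
split.
- by split=> //; exists (fun _ => 0); apply: span_ext (span0 _) _ => y; rewrite emb0.
- move=> r r' [supp_r [v Jv]] [supp_r' [v' Jv']]; split.
    by move=> q cq; rewrite supp_r // supp_r' // addr0.
  by exists (fun i => v i + v' i); apply: span_ext (spanD Jv Jv') _ => y; rewrite embD.
- move=> r [supp_r [v Jv]]; split; first by move=> q cq; rewrite supp_r // oppr0.
  by exists (fun i => - v i); apply: span_ext (spanN Jv) _ => y; rewrite embN.
Qed.

Lemma Iset_extendable : restriction_surjective eL eR S -> extendable (Iset eL eR S).
Proof.
move=> surj phi phiD; have [l Hl] := surj phi phiD.
by exists l => r Ir; rewrite -Hl // pairing_pairV2 //; case: Ir.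
Qed.

Lemma Iperp_dual_residue s q :
    (forall r, Iset eL eR S r -> forall q', r q' = \sum_(a <- s) pairing a.2 r * a.1 q') ->
  Iperp eL eR S (dual_residue s q).
Proof.
move=> s_rep r Ir; rewrite -pairing_pairV2; last by case: Ir.
exact: pairing_dual_residue s_rep Ir.
Qed.

Variable L : 'I_m -> V2 m.

Definition delta q : V2 m := fun q' => (q' == q)%:Z.

(* The element phi(r) (+) r of V (+) V (x) V, with phi(r) read off through L. *)
Definition phi_graph r : pth -> int := emb (fun i => pairV2 eL eR (L i) r) r.

Lemma phi_graph_Jideal r : mu1_lift eL eR S L -> Iset eL eR S r -> Jideal eL eR S (phi_graph r).
Proof.
move=> hL [supp_r [v Jv]].
rewrite /phi_graph; suff -> : (fun i => pairV2 eL eR (L i) r) = v by [].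
by apply: functional_extensionality => i; exact: hL.
Qed.

Lemma sum_delta_mul q (F : 'I_m * 'I_m -> int) : \sum_q' delta q q' * F q' = F q.
Proof.
rewrite -[RHS](sum_if_eq q F); apply: eq_bigr => q' _.
by rewrite /delta; case: (q' == q); rewrite ?mul1r ?mul0r.
Qed.

Lemma phi_graph_delta q y : phi_graph (delta q) y =
  \sum_i (if comp q.1 q.2 then L i q else 0) * bas1 i y + bas2 q y.
Proof.
rewrite /phi_graph embE sum_delta_mul; congr (_ + _); apply: eq_bigr => i _.
rewrite /pairV2 big_mkcond; congr (_ * _).
rewrite (eq_bigr (fun q' => delta q q' * if comp q'.1 q'.2 then L i q' else 0)).
  by rewrite sum_delta_mul.
by move=> q' _; case: ifP; rewrite ?mulr0 // mulrC.
Qed.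

Lemma phi_graph_pairing r y : phi_graph r y = pairing r (fun q => phi_graph (delta q) y).
Proof.
rewrite {1}/phi_graph embE /pairing /=.
under [RHS]eq_bigr do rewrite phi_graph_delta mulrDr mulr_sumr.
rewrite big_split /=; congr (_ + _); rewrite exchange_big; apply: eq_bigr => i _.
rewrite /pairV2 big_mkcond mulr_suml; apply: eq_bigr => q _.
by case: ifP => _; ring.
Qed.

Lemma emb0_pairing l y : emb (fun _ => 0) l y = pairing l (fun q => bas2 q y).
Proof. by rewrite embE big1 ?add0r // => i _; rewrite mul0r. Qed.

Lemma DD_lhsE x : DD_lhs eL eR L x = if pend x.1 == pend x.2
  then pairing (fun q => phi_graph (delta q) x.1) (fun q => bas2 q x.2) else 0.
Proof.
rewrite /DD_lhs big1 ?add0r => [|s _]; last by rewrite /tens /muB mul0r if_same mulr0.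
rewrite pair_bigA /tens /pairing /=; case: ifP => _; last by rewrite !big1 ?addr0.
under [in RHS]eq_bigr do rewrite phi_graph_delta mulrDl mulr_suml.
rewrite big_split /=; congr (_ + _); last by apply: eq_bigr => -[s t] _; rewrite mul1r.
rewrite exchange_big /=; apply: eq_bigr => i _.
rewrite emb0_pairing /pairing mulr_sumr; apply: eq_bigr => q _.
by rewrite /bas2; case: ifP => _; ring.
Qed.

Lemma DD_lhs_split s x : DD_lhs eL eR L x =
    \sum_(a <- s) tens (phi_graph a.1) (emb (fun _ => 0) a.2) x
  + \sum_q tens (phi_graph (delta q)) (emb (fun _ => 0) (dual_residue s q)) x.
Proof.
rewrite DD_lhsE /tens; case: ifP => _; last by rewrite !big1 ?addr0.
rewrite (pairing_split_residue s).
by congr (_ + _); apply: eq_bigr => ? _; rewrite phi_graph_pairing emb0_pairing.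
Qed.

End Model.

Theorem proposition4p24
  (k m : nat) (eL eR : 'I_m -> 'I_k)
  (S : ('I_m -> int) -> V2 m -> Prop)
  (G : Type) (gmul : G -> G -> G) (deg : 'I_m -> G)
  (hJV : J_cap_V_zero eL eR S)
  (hres : restriction_surjective eL eR S)
  (hgr : graded_hyp eL eR S gmul deg)
  (L : 'I_m -> V2 m) (hL : mu1_lift eL eR S L) :
  zero_in_tensor eL eR S (DD_lhs eL eR L).
Proof.
(* J cap V = 0 and the grading only make phi and mu_1 well defined; mu_1 is given here by L. *)
have [s [sI s_rep]] := dual_basis (Iset_subgroup eL eR S) (Iset_extendable hres).
rewrite /zero_in_tensor (functional_extensionality _ _ (DD_lhs_split eL eR L s)).
apply: spanD.
- apply: span_sum => a /sI Ia.
  exact/Nsub_tens_Jideal/phi_graph_Jideal.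
- apply: span_sum => q _.
  exact/Nsub_tens_Kideal/Kideal_emb/Iperp_dual_residue.
Qed.
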